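(* Let $(W,S)$ be a Coxeter system with $S$ finite such that all elements of $Q_W$ are conjugate in $W$ (i.e. $c(W)=1$). Then the central extension $0\to\mathbb{Z}\to\operatorname{Ad}(Q_W)\xrightarrow{\phi}W\to1$ (where $\mathbb{Z}$ is identified with $\ker\phi$ via $1\mapsto e_s^2$, $s\in S$) is the unique nontrivial central extension of $W$ by $\mathbb{Z}$, up to equivalence of extensions.
   Context: A Coxeter system $(W,S)$: $S$ finite, $m:S\times S\to\mathbb{N}\cup\{\infty\}$ with $m(s,s)=1$, $2\le m(s,t)=m(t,s)\le\infty$ for $s\ne t$, $W=\langle s\in S\mid (st)^{m(s,t)}=1\ (m(s,t)<\infty)\rangle$. The Coxeter quandle $Q_W=\bigcup_{w\in W}w^{-1}Sw$ has operation $x\ast y=yxy$; $\operatorname{Ad}(Q_W)=\langle e_x\ (x\in Q_W)\mid e_y^{-1}e_xe_y=e_{x\ast y}\rangle$; $\phi:\operatorname{Ad}(Q_W)\to W$ is $e_x\mapsto x$. When $c(W)=1$, $\ker\phi$ is central and infinite cyclic, generated by $e_s^2$, which is independent of $s\in S$. *)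

(* abstract (possibly infinite) groups as records with
   Leibniz equality; groups given by presentations are characterized by
   their universal property. *)
From Stdlib Require Import ZArith List Lia.

Record group := Group {
  carrier :> Type;
  mul : carrier -> carrier -> carrier;
  one : carrier;
  inv : carrier -> carrier;
  mulA : forall x y z, mul x (mul y z) = mul (mul x y) z;
  mul1g : forall x, mul one x = x;
  mulg1 : forall x, mul x one = x;
  mulVg : forall x, mul (inv x) x = one;
  mulgV : forall x, mul x (inv x) = one }.

Arguments mul {g} _ _.
Arguments one {g}.
Arguments inv {g} _.

Definition is_hom (G H : group) (f : G -> H) : Prop :=
  forall x y, f (mul x y) = mul (f x) (f y).
Arguments is_hom {G H} f.

Definition pow_nat {G : group} (x : G) (n : nat) : G :=
  Nat.iter n (fun y => mul x y) one.

Definition zpow {G : group} (x : G) (n : Z) : G :=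
  match n with
  | Z0 => one
  | Zpos p => pow_nat x (Pos.to_nat p)
  | Zneg p => inv (pow_nat x (Pos.to_nat p))
  end.

Definition Zgroup : group.
Proof.
  refine (@Group Z Z.add 0%Z Z.opp _ _ _ _ _); intros; lia.
Defined.

Definition prod_group (G H : group) : group.
Proof.
  refine (@Group (G * H)%type
            (fun a b => (mul (fst a) (fst b), mul (snd a) (snd b)))
            (one, one)
            (fun a => (inv (fst a), inv (snd a))) _ _ _ _ _).
  - intros [] [] []; simpl; now rewrite !mulA.
  - intros []; simpl; now rewrite !mul1g.
  - intros []; simpl; now rewrite !mulg1.
  - intros []; simpl; now rewrite !mulVg.
  - intros []; simpl; now rewrite !mulgV.
Defined.

(* m s t = None encodes m(s,t) = infinity *)
Definition coxeter_matrix {S : Type} (m : S -> S -> option nat) : Prop :=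
  (forall s, m s s = Some 1) /\
  (forall s t, m s t = m t s) /\
  (forall s t k, s <> t -> m s t = Some k -> 2 <= k).

Definition cox_rel {S : Type} (m : S -> S -> option nat) (H : group)
  (f : S -> H) : Prop :=
  forall s t k, m s t = Some k -> pow_nat (mul (f s) (f t)) k = one.

(** (W, sigma) is the group presented by <S | (st)^m(s,t) = 1>. *)
Definition is_coxeter_group {S : Type} (m : S -> S -> option nat)
  (W : group) (sigma : S -> W) : Prop :=
  cox_rel m W sigma /\
  forall (H : group) (f : S -> H), cox_rel m H f ->
    exists g : W -> H, is_hom g /\ (forall s, g (sigma s) = f s) /\
      (forall g' : W -> H, is_hom g' -> (forall s, g' (sigma s) = f s) ->
         forall x, g' x = g x).

Definition in_QW {S : Type} {W : group} (sigma : S -> W) (x : W) : Prop :=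
  exists (w : W) (s : S), x = mul (inv w) (mul (sigma s) w).

Definition qop {W : group} (x y : W) : W := mul y (mul x y).

Definition adj_rel {W : group} (Q : W -> Prop) (H : group) (f : W -> H)
  : Prop :=
  forall x y, Q x -> Q y -> mul (inv (f y)) (mul (f x) (f y)) = f (qop x y).

(** (A, e) is the adjoint group Ad(Q) = < e_x (x in Q) | e_y^-1 e_x e_y =
    e_{x*y} >; only the values of e on Q are meaningful. *)
Definition is_adjoint_group {W : group} (Q : W -> Prop) (A : group)
  (e : W -> A) : Prop :=
  adj_rel Q A e /\
  forall (H : group) (f : W -> H), adj_rel Q H f ->
    exists g : A -> H, is_hom g /\ (forall x, Q x -> g (e x) = f x) /\
      (forall g' : A -> H, is_hom g' -> (forall x, Q x -> g' (e x) = f x) ->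
         forall a, g' a = g a).

Definition is_central_ext {W E : group} (i : Zgroup -> E) (p : E -> W)
  : Prop :=
  is_hom i /\ is_hom p /\
  (forall n n', i n = i n' -> n = n') /\
  (forall w, exists x, p x = w) /\
  (forall x, p x = one <-> exists n, x = i n) /\
  (forall n x, mul (i n) x = mul x (i n)).

Definition ext_equiv {W E E' : group} (i : Zgroup -> E) (p : E -> W)
  (i' : Zgroup -> E') (p' : E' -> W) : Prop :=
  exists theta : E -> E', is_hom theta /\
    (forall n, theta (i n) = i' n) /\ (forall x, p' (theta x) = p x).

Definition triv_i (W : group) : Zgroup -> prod_group Zgroup W :=
  fun n => (n, one).
Definition triv_p (W : group) : prod_group Zgroup W -> W := fun a => snd a.

Definition trivial_ext {W E : group} (i : Zgroup -> E) (p : E -> W) : Prop :=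
  ext_equiv (triv_i W) (triv_p W) i p.

(* Each square e_x^2 (x in Q_W) is central in Ad(Q_W) and invariant under conjugating x,
   so when Q_W is one conjugacy class all of them equal a single central z = e_s^2.  Once z
   is killed, the e_s satisfy the Coxeter relations; this inverts Ad(Q_W)/<z> -> W, hence
   ker phi = <z>.  The degree map e_x |-> 1 into Z sends z to 2, so z has infinite order, and
   there is no splitting: it would give an involution c over s, and e_s c^-1 in <z> would
   have even degree, while its degree is 1.
   Given another central extension 0 -> Z -> E -> W -> 1, a conjugate of a lift of s is
   determined by its image (two such have equal squares and the kernel is torsion free), so
   sending e_x to the conjugate over x defines Ad(Q_W) -> E over W.  It maps z to some i(n);
   twisting by a |-> i(-(n/2) deg a) makes n = 0, giving a splitting, or n = 1, giving an
   equivalence with Ad(Q_W). *)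

From Stdlib Require Import ZArith List Lia.
From Stdlib Require Import ProofIrrelevance ClassicalEpsilon.

Definition conjg {G : group} (a b : G) : G := mul (inv b) (mul a b).

Section GroupFacts.
Variable G : group.
Implicit Types a b c x y : G.

Lemma mul_cancel_l a x y : mul a x = mul a y -> x = y.
Proof.
  intros H. rewrite <- (mul1g _ x), <- (mul1g _ y), <- (mulVg _ a), <- !mulA, H.
  reflexivity.
Qed.

Lemma mul_cancel_r a x y : mul x a = mul y a -> x = y.
Proof.
  intros H. rewrite <- (mulg1 _ x), <- (mulg1 _ y), <- (mulgV _ a), !mulA, H.
  reflexivity.
Qed.

Lemma inv_unique x y : mul x y = one -> y = inv x.
Proof. intros H. apply (mul_cancel_l x). now rewrite H, mulgV. Qed.

Lemma invgK x : inv (inv x) = x.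
Proof. symmetry. apply inv_unique, mulVg. Qed.

Lemma invMg x y : inv (mul x y) = mul (inv y) (inv x).
Proof.
  symmetry. apply inv_unique.
  now rewrite <- mulA, (mulA _ y), mulgV, mul1g, mulgV.
Qed.

Lemma invg1 : inv (@one G) = one.
Proof. symmetry. apply inv_unique, mul1g. Qed.

Lemma pow_nat_succ_r x n : pow_nat x (S n) = mul (pow_nat x n) x.
Proof.
  induction n as [|n IH]; simpl in *.
  - now rewrite mulg1, mul1g.
  - now rewrite IH at 1; rewrite mulA.
Qed.

Lemma pow_nat_swap a b j : mul a (pow_nat (mul b a) j) = mul (pow_nat (mul a b) j) a.
Proof.
  induction j as [|j IH]; simpl.
  - now rewrite mul1g, mulg1.
  - rewrite mulA, (mulA _ a b a), <- (mulA _ (mul a b) a), IH.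
    apply mulA.
Qed.

Lemma zpow_of_nat x k : zpow x (Z.of_nat k) = pow_nat x k.
Proof. destruct k; simpl; [|rewrite SuccNat2Pos.id_succ]; reflexivity. Qed.

Lemma zpow_opp_of_nat x k : zpow x (- Z.of_nat k) = inv (pow_nat x k).
Proof. destruct k; simpl; [now rewrite invg1 | now rewrite SuccNat2Pos.id_succ]. Qed.

Lemma Z_of_nat_cases (n : Z) : exists k, n = Z.of_nat k \/ n = (- Z.of_nat k)%Z.
Proof.
  destruct (Z_le_gt_dec 0 n); [exists (Z.to_nat n) | exists (Z.to_nat (- n))]; lia.
Qed.

Lemma zpow_succ x n : zpow x (n + 1) = mul (zpow x n) x.
Proof.
  destruct (Z_of_nat_cases n) as [[|k] [-> | ->]].
  1-2: simpl; now rewrite mul1g, mulg1.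
  - replace (Z.of_nat (S k) + 1)%Z with (Z.of_nat (S (S k))) by lia.
    rewrite !zpow_of_nat. apply pow_nat_succ_r.
  - replace (- Z.of_nat (S k) + 1)%Z with (- Z.of_nat k)%Z by lia.
    rewrite !zpow_opp_of_nat. simpl.
    now rewrite invMg, <- mulA, mulVg, mulg1.
Qed.

Lemma zpow_pred x n : zpow x (n - 1) = mul (zpow x n) (inv x).
Proof.
  apply (mul_cancel_r x).
  rewrite <- mulA, mulVg, mulg1, <- zpow_succ. f_equal. lia.
Qed.

Lemma zpow_add x (n1 n2 : Z) : zpow x (n1 + n2) = mul (zpow x n1) (zpow x n2).
Proof.
  induction n2 as [|n2 IH|n2 IH] using Z.peano_ind.
  - simpl. now rewrite Z.add_0_r, mulg1.
  - rewrite <- !Z.add_1_r, Z.add_assoc, !zpow_succ, IH. symmetry; apply mulA.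
  - rewrite <- !Z.sub_1_r.
    replace (n1 + (n2 - 1))%Z with (n1 + n2 - 1)%Z by lia.
    rewrite !zpow_pred, IH. symmetry; apply mulA.
Qed.

Lemma zpow_opp x n : zpow x (- n) = inv (zpow x n).
Proof. apply inv_unique. now rewrite <- zpow_add, Z.add_opp_diag_r. Qed.

Lemma zpow1g n : zpow (@one G) n = one.
Proof.
  assert (pow1 : forall k, pow_nat (@one G) k = one).
  { induction k as [|k IH]; simpl; [|rewrite IH, mul1g]; reflexivity. }
  destruct (Z_of_nat_cases n) as [k [-> | ->]].
  - now rewrite zpow_of_nat.
  - now rewrite zpow_opp_of_nat, pow1, invg1.
Qed.

Lemma commute_zpow x y n : mul x y = mul y x -> mul (zpow x n) y = mul y (zpow x n).
Proof.
  intros Hxy.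
  assert (Hpow : forall k, mul (pow_nat x k) y = mul y (pow_nat x k)).
  { induction k as [|k IH]; simpl.
    - now rewrite mul1g, mulg1.
    - now rewrite <- mulA, IH, !mulA, Hxy. }
  destruct (Z_of_nat_cases n) as [k [-> | ->]].
  - now rewrite zpow_of_nat.
  - rewrite zpow_opp_of_nat. apply (mul_cancel_l (pow_nat x k)).
    now rewrite mulA, mulgV, mul1g, !mulA, Hpow, <- mulA, mulgV, mulg1.
Qed.

Lemma conjg1 a : conjg a one = a.
Proof. unfold conjg. now rewrite invg1, mul1g, mulg1. Qed.

Lemma conjgM a b c : conjg a (mul b c) = conjg (conjg a b) c.
Proof. unfold conjg. now rewrite invMg, !mulA. Qed.

Lemma mul_conjg a b : mul b (conjg a b) = mul a b.
Proof. unfold conjg. now rewrite mulA, mulgV, mul1g. Qed.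

Lemma conjg_central a b : (forall x, mul a x = mul x a) -> conjg a b = a.
Proof. intros Ha. unfold conjg. now rewrite Ha, mulA, mulVg, mul1g. Qed.

Lemma conjg_sqr a b : mul (conjg a b) (conjg a b) = conjg (mul a a) b.
Proof.
  unfold conjg. rewrite !mulA. f_equal. rewrite <- !mulA. do 2 f_equal.
  now rewrite !mulA, mulgV, mul1g.
Qed.

Lemma conjg_dihedral_word a b j :
  inv a = a -> conjg (mul (pow_nat (mul b a) j) b) a = mul (pow_nat (mul a b) (S j)) a.
Proof.
  intros Ha. unfold conjg. rewrite Ha, pow_nat_succ_r, !mulA, pow_nat_swap.
  now rewrite <- !mulA.
Qed.

End GroupFacts.

Section Homomorphisms.
Variables (G H : group) (f : G -> H).
Hypothesis f_hom : is_hom f.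

Lemma hom_one : f one = one.
Proof. apply (mul_cancel_l _ (f one)). now rewrite <- f_hom, !mulg1. Qed.

Lemma hom_inv x : f (inv x) = inv (f x).
Proof. apply inv_unique. rewrite <- f_hom, mulgV. apply hom_one. Qed.

Lemma hom_pow_nat x k : f (pow_nat x k) = pow_nat (f x) k.
Proof.
  induction k as [|k IH]; simpl; [apply hom_one|].
  now rewrite f_hom, IH.
Qed.

Lemma hom_zpow x n : f (zpow x n) = zpow (f x) n.
Proof.
  destruct (Z_of_nat_cases n) as [k [-> | ->]].
  - now rewrite !zpow_of_nat, hom_pow_nat.
  - now rewrite !zpow_opp_of_nat, hom_inv, hom_pow_nat.
Qed.

Lemma hom_conjg a b : f (conjg a b) = conjg (f a) (f b).
Proof. unfold conjg. now rewrite !f_hom, hom_inv. Qed.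

End Homomorphisms.

Lemma Zgroup_zpow (c : Zgroup) n : zpow c n = (c * n)%Z.
Proof.
  assert (Hpow : forall k, pow_nat c k = (c * Z.of_nat k)%Z).
  { induction k as [|k IH]; simpl pow_nat; cbn -[Z.mul Z.of_nat]; lia. }
  destruct (Z_of_nat_cases n) as [k [-> | ->]].
  - rewrite zpow_of_nat. apply Hpow.
  - rewrite zpow_opp_of_nat, Hpow. cbn -[Z.mul Z.of_nat]. lia.
Qed.

Lemma twist_hom (G E : group) (f : G -> E) (d : G -> Zgroup) (i : Zgroup -> E) (c : Z) :
  is_hom f -> is_hom d -> is_hom i -> (forall n x, mul (i n) x = mul x (i n)) ->
  is_hom (fun a => mul (f a) (i (c * d a)%Z)).
Proof.
  intros f_hom d_hom i_hom i_central a b.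
  rewrite f_hom, d_hom, Z.mul_add_distr_l.
  change (i (c * d a + c * d b)%Z) with (i (@mul Zgroup (c * d a)%Z (c * d b)%Z)).
  rewrite i_hom, <- !mulA. f_equal. rewrite !mulA. f_equal. symmetry. apply i_central.
Qed.

Definition subgroup (G : group) (P : G -> Prop) (P1 : P one)
  (PM : forall x y, P x -> P y -> P (mul x y)) (PV : forall x, P x -> P (inv x)) : group.
Proof.
  refine (@Group {x | P x}
    (fun a b => exist _ (mul (proj1_sig a) (proj1_sig b)) (PM _ _ (proj2_sig a) (proj2_sig b)))
    (exist _ one P1) (fun a => exist _ (inv (proj1_sig a)) (PV _ (proj2_sig a))) _ _ _ _ _);
  intros; repeat match goal with a : {x | P x} |- _ => destruct a end;
  apply subset_eq_compat; simpl.
  - apply mulA.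
  - apply mul1g.
  - apply mulg1.
  - apply mulVg.
  - apply mulgV.
Defined.

Section CentralCyclicQuotient.
Variables (G : group) (z : G) (d : G -> Zgroup).
Hypotheses (z_central : forall a, mul z a = mul a z) (d_hom : is_hom d) (d_z : d z <> 0%Z).

(* [zreduce a] is the representative of the coset a<z> of degree [d a mod d z]. *)
Definition zreduce (a : G) : G := mul a (zpow z (- (d a / d z))).

Lemma zreduce_mul_zpow a n : zreduce (mul a (zpow z n)) = zreduce a.
Proof.
  unfold zreduce. rewrite d_hom, (hom_zpow _ _ d d_hom), Zgroup_zpow.
  change (@mul Zgroup (d a) (d z * n)%Z) with (d a + d z * n)%Z.
  rewrite (Z.mul_comm (d z) n), Z.div_add by exact d_z.
  rewrite <- mulA, <- zpow_add. do 2 f_equal. lia.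
Qed.

Lemma zreduce_idem a : zreduce (zreduce a) = zreduce a.
Proof. apply zreduce_mul_zpow. Qed.

Lemma zreduce_mul_l a b : zreduce (mul (zreduce a) b) = zreduce (mul a b).
Proof.
  unfold zreduce at 2.
  rewrite <- mulA, (commute_zpow _ _ _ _ (z_central b)), mulA.
  apply zreduce_mul_zpow.
Qed.

Lemma zreduce_mul_r a b : zreduce (mul a (zreduce b)) = zreduce (mul a b).
Proof. unfold zreduce at 2. rewrite mulA. apply zreduce_mul_zpow. Qed.

Lemma zreduce_one : zreduce one = one.
Proof. unfold zreduce. rewrite hom_one by exact d_hom. simpl. apply mulg1. Qed.

Lemma zreduce_z : zreduce z = one.
Proof.
  rewrite <- zreduce_one, <- (zreduce_mul_zpow one 1). f_equal. simpl.
  now rewrite mul1g, mulg1.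
Qed.

Lemma zreduce_eq1 a : zreduce a = one -> exists n, a = zpow z n.
Proof.
  unfold zreduce. intros H. exists (d a / d z)%Z.
  rewrite <- (invgK _ (zpow z (d a / d z))), <- zpow_opp.
  apply (mul_cancel_r _ (zpow z (- (d a / d z)))). now rewrite H, mulVg.
Qed.

Definition central_quotient : group.
Proof.
  refine (@Group {a : G | zreduce a = a}
    (fun a b => exist _ (zreduce (mul (proj1_sig a) (proj1_sig b))) (zreduce_idem _))
    (exist _ one zreduce_one)
    (fun a => exist _ (zreduce (inv (proj1_sig a))) (zreduce_idem _)) _ _ _ _ _);
  intros; repeat match goal with a : {x | zreduce x = x} |- _ => destruct a end;
  apply subset_eq_compat; simpl.
  - now rewrite zreduce_mul_r, zreduce_mul_l, mulA.
  - now rewrite mul1g.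
  - now rewrite mulg1.
  - rewrite zreduce_mul_l, mulVg. apply zreduce_one.
  - rewrite zreduce_mul_r, mulgV. apply zreduce_one.
Defined.

Definition central_quotient_proj (a : G) : central_quotient :=
  exist _ (zreduce a) (zreduce_idem a).

Lemma central_quotient_proj_hom : is_hom central_quotient_proj.
Proof.
  intros a b. apply subset_eq_compat. simpl.
  now rewrite zreduce_mul_l, zreduce_mul_r.
Qed.

Lemma central_quotient_proj_z : central_quotient_proj z = one.
Proof. apply subset_eq_compat, zreduce_z. Qed.

Lemma central_quotient_proj_eq1 a :
  central_quotient_proj a = one -> exists n, a = zpow z n.
Proof. intros H. apply zreduce_eq1. exact (f_equal (@proj1_sig _ _) H). Qed.

End CentralCyclicQuotient.

Section CentralExtensions.
Variables (W E : group) (i : Zgroup -> E) (p : E -> W).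
Hypothesis ext : is_central_ext i p.

Lemma central_ext_kernel_central c x : p c = one -> mul c x = mul x c.
Proof.
  destruct ext as (_ & _ & _ & _ & p_ker & i_central).
  intros Hc. destruct (proj1 (p_ker c) Hc) as [n ->]. apply i_central.
Qed.

(* y' = y i(n) with i(n) central, so y'^2 = y^2 i(2n) and torsion freeness forces n = 0. *)
Lemma central_ext_sqr_inj y y' : p y = p y' -> mul y y = mul y' y' -> y = y'.
Proof.
  destruct ext as (i_hom & p_hom & i_inj & _ & p_ker & _).
  intros Hp Hsq.
  destruct (proj1 (p_ker (mul (inv y) y'))) as [n Hn].
  { now rewrite p_hom, hom_inv, Hp, mulVg. }
  assert (Hy' : y' = mul y (i n)) by now rewrite <- Hn, mulA, mulgV, mul1g.
  assert (Hnn : mul (i n) (i n) = one).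
  { apply (mul_cancel_l _ (mul y y)).
    rewrite mulg1. rewrite Hsq at 2. rewrite Hy', <- !mulA. f_equal. rewrite !mulA. f_equal.
    symmetry. apply central_ext_kernel_central. apply p_ker. eauto. }
  rewrite <- i_hom, <- (hom_one _ _ i i_hom) in Hnn.
  apply i_inj in Hnn. simpl in Hnn.
  rewrite Hy'. replace n with 0%Z by lia.
  now rewrite (hom_one _ _ i i_hom : i 0%Z = one), mulg1.
Qed.

Lemma central_ext_conjg_lift_unique eps g h :
  mul (p eps) (p eps) = one -> p (conjg eps g) = p (conjg eps h) ->
  conjg eps g = conjg eps h.
Proof.
  destruct ext as (_ & p_hom & _).
  intros p_eps Hp. apply central_ext_sqr_inj; auto.
  assert (eps2_central : forall x, mul (mul eps eps) x = mul x (mul eps eps)).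
  { intros x. apply central_ext_kernel_central. now rewrite p_hom. }
  now rewrite !conjg_sqr, !conjg_central.
Qed.

Lemma split_central_ext_trivial (sh : W -> E) :
  is_hom sh -> (forall w, p (sh w) = w) -> trivial_ext i p.
Proof.
  destruct ext as (i_hom & p_hom & _ & _ & p_ker & i_central).
  intros sh_hom p_sh.
  exists (fun nw : prod_group Zgroup W => mul (i (fst nw)) (sh (snd nw))).
  split; [|split].
  - intros [a w] [b w']. simpl. rewrite i_hom, sh_hom, <- !mulA. f_equal.
    rewrite !mulA. f_equal. apply i_central.
  - intros n. simpl. now rewrite (hom_one _ _ sh sh_hom), mulg1.
  - intros [n w]. unfold triv_p. simpl.
    rewrite p_hom, p_sh, (proj2 (p_ker (i n))) by eauto. apply mul1g.
Qed.

End CentralExtensions.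

Section Coxeter.
Variables (S : Type) (m : S -> S -> option nat) (Hm : coxeter_matrix m)
  (W : group) (sigma : S -> W) (HW : is_coxeter_group m W sigma).

Local Notation Q := (in_QW sigma).

Lemma sigma_invol t : mul (sigma t) (sigma t) = one.
Proof.
  destruct Hm as [m_diag _].
  generalize (proj1 HW t t 1 (m_diag t)). simpl. now rewrite mulg1.
Qed.

Lemma inv_sigma t : inv (sigma t) = sigma t.
Proof. symmetry. apply inv_unique, sigma_invol. Qed.

Lemma W_hom_ext (H : group) (f g : W -> H) :
  is_hom f -> is_hom g -> (forall t, f (sigma t) = g (sigma t)) -> forall w, f w = g w.
Proof.
  intros f_hom g_hom Hfg w. destruct HW as [W_rel W_univ].
  destruct (W_univ H (fun t => f (sigma t))) as [h [_ [_ h_unique]]].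
  { intros a b k Hk. now rewrite <- f_hom, <- hom_pow_nat, (W_rel a b k Hk), hom_one. }
  now rewrite (h_unique f f_hom), (h_unique g g_hom).
Qed.

(* The w such that left multiplication by w and by w^-1 both preserve P form a subgroup
   containing the generators. *)
Lemma W_ind (P : W -> Prop) :
  P one -> (forall t w, P w -> P (mul (sigma t) w)) -> forall w, P w.
Proof.
  intros P1 P_sigma.
  set (R := fun w => (forall v, P v -> P (mul w v)) /\ (forall v, P v -> P (mul (inv w) v))).
  assert (R1 : R one) by (split; intros v; rewrite ?invg1, mul1g; auto).
  assert (RM : forall x y, R x -> R y -> R (mul x y)).
  { intros x y [Rx Rx'] [Ry Ry']. split; intros v Pv.
    - rewrite <- mulA. auto.
    - rewrite invMg, <- mulA. auto. }
  assert (RV : forall x, R x -> R (inv x)).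
  { intros x [Rx Rx']. split; intros v Pv; rewrite ?invgK; auto. }
  assert (R_sigma : forall t, R (sigma t)).
  { intros t. split; intros v Pv; rewrite ?inv_sigma; auto. }
  set (K := subgroup W R R1 RM RV).
  assert (val_hom : is_hom (@proj1_sig W R : K -> W)) by (intros x y; reflexivity).
  destruct (proj2 HW K (fun t => exist _ (sigma t) (R_sigma t))) as [g [g_hom [g_sigma _]]].
  { intros a b k Hk. apply eq_sig_hprop; [intros; apply proof_irrelevance|].
    rewrite (hom_pow_nat _ _ _ val_hom). apply (proj1 HW a b k Hk). }
  assert (val_g : forall w, proj1_sig (g w) = w).
  { apply (W_hom_ext W (fun w => proj1_sig (g w)) (fun w => w)).
    - intros x y. now rewrite g_hom.
    - intros x y. reflexivity.
    - intros t. now rewrite g_sigma. }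
  intros w. rewrite <- (mulg1 _ w), <- (val_g w). apply (proj2_sig (g w)). exact P1.
Qed.

Lemma Q_sigma t : Q (sigma t).
Proof. exists one, t. now rewrite invg1, mul1g, mulg1. Qed.

Lemma Q_conjg x w : Q x -> Q (conjg x w).
Proof.
  intros [v [t ->]]. exists (mul v w), t. unfold conjg. now rewrite invMg, !mulA.
Qed.

Lemma Q_invol x : Q x -> mul x x = one.
Proof.
  intros [w [t ->]]. fold (conjg (sigma t) w).
  rewrite conjg_sqr, sigma_invol. unfold conjg. now rewrite mul1g, mulVg.
Qed.

Lemma inv_Q x : Q x -> inv x = x.
Proof. intros Qx. symmetry. apply inv_unique, Q_invol, Qx. Qed.

Lemma qop_conjg x y : Q y -> qop x y = conjg x y.
Proof. intros Qy. unfold qop, conjg. now rewrite inv_Q. Qed.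

Lemma Q_qop x y : Q x -> Q y -> Q (qop x y).
Proof. intros Qx Qy. rewrite qop_conjg by exact Qy. now apply Q_conjg. Qed.

Lemma Q_conjg_ind (P : W -> Prop) :
  (forall x t, Q x -> P x -> P (conjg x (sigma t))) ->
  forall x w, Q x -> P x -> P (conjg x w).
Proof.
  intros P_sigma x w. revert x.
  induction w as [|t w IH] using W_ind; intros x Qx Px.
  - now rewrite conjg1.
  - rewrite conjgM. apply IH; [apply Q_conjg|]; auto.
Qed.

Lemma Q_dihedral_word j t u : Q (mul (pow_nat (mul (sigma t) (sigma u)) j) (sigma t)).
Proof.
  revert t u. induction j as [|j IH]; intros t u.
  - simpl. rewrite mul1g. apply Q_sigma.
  - rewrite <- conjg_dihedral_word by apply inv_sigma. apply Q_conjg, IH.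
Qed.

Section Adjoint.
Variables (A : group) (e : W -> A) (HA : is_adjoint_group Q A e).

Lemma A_hom_ext (H : group) (f g : A -> H) :
  is_hom f -> is_hom g -> (forall x, Q x -> f (e x) = g (e x)) -> forall a, f a = g a.
Proof.
  intros f_hom g_hom Hfg a. destruct HA as [A_rel A_univ].
  destruct (A_univ H (fun x => f (e x))) as [h [_ [_ h_unique]]].
  { intros x y Qx Qy. rewrite <- (hom_inv _ _ f f_hom), <- !f_hom. now rewrite A_rel. }
  rewrite (h_unique f f_hom), (h_unique g g_hom); auto.
  intros x Qx. symmetry. auto.
Qed.

Lemma e_conjg x y : Q x -> Q y -> e (conjg x y) = conjg (e x) (e y).
Proof.
  intros Qx Qy. rewrite <- qop_conjg by exact Qy. symmetry. now apply (proj1 HA).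
Qed.

Lemma adjoint_degree_exists :
  exists deg : A -> Zgroup, is_hom deg /\ forall x, Q x -> deg (e x) = 1%Z.
Proof.
  destruct (proj2 HA Zgroup (fun _ => 1%Z)) as [deg [deg_hom [deg_e _]]].
  - intros x y _ _. cbn. lia.
  - now exists deg.
Qed.

Lemma central_of_commute_e c :
  (forall x, Q x -> mul c (e x) = mul (e x) c) -> forall a, mul c a = mul a c.
Proof.
  intros Hc a.
  assert (conj_c : forall b, conjg b c = b).
  { apply (A_hom_ext A (fun b => conjg b c) (fun b => b)).
    - intros x y. unfold conjg. now rewrite !mulA, <- (mulA _ _ c (inv c)), mulgV, mulg1.
    - intros x y. reflexivity.
    - intros x Qx. apply (mul_cancel_l _ c). now rewrite mul_conjg, Hc. }
  rewrite <- (mul_conjg _ a c), conj_c. reflexivity.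
Qed.

(* Conjugation by e_x^2 sends e_y to e_((y*x)*x) = e_y. *)
Lemma e_sqr_central x : Q x -> forall a, mul (mul (e x) (e x)) a = mul a (mul (e x) (e x)).
Proof.
  intros Qx. apply central_of_commute_e. intros y Qy.
  assert (Hyxx : conjg (conjg y x) x = y).
  { rewrite <- conjgM, Q_invol by exact Qx. apply conjg1. }
  assert (H1 : mul (e x) (e (conjg y x)) = mul (e y) (e x)).
  { rewrite e_conjg by exact Qx || exact Qy. apply mul_conjg. }
  assert (H2 : mul (e x) (e y) = mul (e (conjg y x)) (e x)).
  { rewrite <- Hyxx at 1. rewrite e_conjg by auto using Q_conjg. apply mul_conjg. }
  rewrite <- mulA, H2, mulA, H1. symmetry. apply mulA.
Qed.

Lemma e_sqr_conjg x w : Q x -> mul (e (conjg x w)) (e (conjg x w)) = mul (e x) (e x).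
Proof.
  intros Qx. apply (Q_conjg_ind (fun y => mul (e y) (e y) = mul (e x) (e x))); auto.
  intros y t Qy Hy. rewrite e_conjg, conjg_sqr, Hy by auto using Q_sigma.
  apply conjg_central, e_sqr_central, Qx.
Qed.

Lemma hom_agree_on_Q (K : group) (pi : A -> K) (psi : W -> K) :
  is_hom pi -> is_hom psi -> (forall t, psi (sigma t) = pi (e (sigma t))) ->
  forall x, Q x -> psi x = pi (e x).
Proof.
  intros pi_hom psi_hom Hsigma x [w [t ->]]. fold (conjg (sigma t) w).
  apply (Q_conjg_ind (fun y => psi y = pi (e y))); auto using Q_sigma.
  intros y u Qy Hy.
  rewrite e_conjg, !hom_conjg, Hy, Hsigma by auto using Q_sigma. reflexivity.
Qed.

Section DihedralRelations.
Variables (K : group) (pi : A -> K).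
Hypotheses (pi_hom : is_hom pi) (pi_e_invol : forall t, pi (mul (e (sigma t)) (e (sigma t))) = one).

Let a t := pi (e (sigma t)).

Lemma inv_a t : inv (a t) = a t.
Proof. symmetry. apply inv_unique. unfold a. rewrite <- pi_hom. apply pi_e_invol. Qed.

Lemma pi_e_dihedral_word j t u :
  pi (e (mul (pow_nat (mul (sigma t) (sigma u)) j) (sigma t))) =
  mul (pow_nat (mul (a t) (a u)) j) (a t).
Proof.
  revert t u. induction j as [|j IH]; intros t u.
  - simpl. now rewrite !mul1g.
  - rewrite <- !conjg_dihedral_word by (apply inv_sigma || apply inv_a).
    rewrite e_conjg, hom_conjg, IH by auto using Q_dihedral_word, Q_sigma. reflexivity.
Qed.

Lemma cox_rel_adjoint : cox_rel m K a.
Proof.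
  intros t u k Hk. destruct k as [|j]; [reflexivity|].
  assert (word_j : mul (pow_nat (mul (sigma t) (sigma u)) j) (sigma t) = sigma u).
  { apply (mul_cancel_r _ (sigma u)). rewrite sigma_invol, <- mulA, <- pow_nat_succ_r.
    exact (proj1 HW t u (Nat.succ j) Hk). }
  rewrite pow_nat_succ_r, mulA, <- pi_e_dihedral_word, word_j.
  unfold a. rewrite <- pi_hom. apply pi_e_invol.
Qed.

End DihedralRelations.

Section OneConjugacyClass.
Hypothesis Q_one_class : forall x y, Q x -> Q y -> exists w : W, y = mul (inv w) (mul x w).
Variable s : S.

Local Notation z := (mul (e (sigma s)) (e (sigma s))).

Lemma e_sqr_eq x : Q x -> mul (e x) (e x) = z.
Proof.
  intros Qx. destruct (Q_one_class _ _ (Q_sigma s) Qx) as [w ->].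
  apply e_sqr_conjg, Q_sigma.
Qed.

Lemma z_central a : mul z a = mul a z.
Proof. apply e_sqr_central, Q_sigma. Qed.

Lemma cox_rel_of_kill_z (K : group) (pi : A -> K) :
  is_hom pi -> pi z = one -> cox_rel m K (fun t => pi (e (sigma t))).
Proof.
  intros pi_hom pi_z. apply cox_rel_adjoint; auto.
  intros t. now rewrite e_sqr_eq by apply Q_sigma.
Qed.

Variables (phi : A -> W) (deg : A -> Zgroup).
Hypotheses (phi_hom : is_hom phi) (phi_e : forall x, Q x -> phi (e x) = x)
  (deg_hom : is_hom deg) (deg_e : forall x, Q x -> deg (e x) = 1%Z).

Lemma phi_z : phi z = one.
Proof. rewrite phi_hom, phi_e by apply Q_sigma. apply sigma_invol. Qed.

Lemma deg_z : deg z = 2%Z.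
Proof. now rewrite deg_hom, deg_e by apply Q_sigma. Qed.

Lemma deg_zpow_z n : deg (zpow z n) = (2 * n)%Z.
Proof. rewrite (hom_zpow _ _ deg deg_hom), deg_z. apply Zgroup_zpow. Qed.

Lemma phi_lift_unique (K : group) (pi : A -> K) (psi : W -> K) :
  is_hom pi -> is_hom psi -> (forall t, psi (sigma t) = pi (e (sigma t))) ->
  forall a, psi (phi a) = pi a.
Proof.
  intros pi_hom psi_hom Hsigma.
  apply A_hom_ext.
  - intros a b. now rewrite phi_hom, psi_hom.
  - exact pi_hom.
  - intros x Qx. rewrite phi_e by exact Qx. now apply hom_agree_on_Q.
Qed.

Lemma ker_phi a : phi a = one -> exists n, a = zpow z n.
Proof.
  intros phi_a.
  assert (deg_z_neq0 : deg z <> 0%Z) by (rewrite deg_z; discriminate).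
  set (pi := central_quotient_proj A z deg z_central deg_hom deg_z_neq0).
  assert (pi_hom : is_hom pi) by apply central_quotient_proj_hom.
  destruct (proj2 HW _ (fun t => pi (e (sigma t)))) as [psi [psi_hom [psi_sigma _]]].
  { apply cox_rel_of_kill_z; auto. apply central_quotient_proj_z. }
  apply (central_quotient_proj_eq1 A z deg z_central deg_hom deg_z_neq0).
  rewrite <- (phi_lift_unique _ pi psi), phi_a by auto. apply (hom_one _ _ psi psi_hom).
Qed.

Lemma phi_central_ext : is_central_ext (fun n : Zgroup => zpow z n) phi.
Proof.
  split; [|split; [|split; [|split; [|split]]]].
  - intros n n'. apply zpow_add.
  - exact phi_hom.
  - intros n n' H. apply (f_equal deg) in H. rewrite !deg_zpow_z in H. lia.
  - induction w as [|t w [a Ha]] using W_ind.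
    + exists one. apply (hom_one _ _ phi phi_hom).
    + exists (mul (e (sigma t)) a). now rewrite phi_hom, Ha, phi_e by apply Q_sigma.
  - intros a. split; [apply ker_phi|].
    intros [n ->]. now rewrite (hom_zpow _ _ phi phi_hom), phi_z, zpow1g.
  - intros n a. apply commute_zpow, z_central.
Qed.

Lemma phi_ext_nontrivial : ~ trivial_ext (fun n : Zgroup => zpow z n) phi.
Proof.
  intros [theta [theta_hom [theta_i theta_p]]].
  set (c := theta (0%Z, sigma s)).
  assert (deg_c : deg c = 0%Z).
  { assert (c_invol : mul c c = one).
    { unfold c. rewrite <- theta_hom. simpl. rewrite sigma_invol. apply (theta_i 0%Z). }
    apply (f_equal deg) in c_invol. rewrite deg_hom, (hom_one _ _ deg deg_hom) in c_invol.
    simpl in c_invol. lia. }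
  destruct (ker_phi (mul (e (sigma s)) (inv c))) as [n Hn].
  { rewrite phi_hom, (hom_inv _ _ phi phi_hom), phi_e by apply Q_sigma.
    unfold c. rewrite theta_p. apply mulgV. }
  apply (f_equal deg) in Hn.
  rewrite deg_hom, (hom_inv _ _ deg deg_hom), deg_e, deg_zpow_z, deg_c in Hn by apply Q_sigma.
  cbn -[Z.mul] in Hn. lia.
Qed.

Section Classification.
Variables (E : group) (i : Zgroup -> E) (p : E -> W).
Hypothesis ext : is_central_ext i p.

(* Over each reflection there is exactly one conjugate of a lift of [sigma s]; these choices
   satisfy the relations of the adjoint group. *)
Lemma adjoint_lift : exists g : A -> E, is_hom g /\ forall a, p (g a) = phi a.
Proof.
  pose proof ext as (_ & p_hom & _ & p_surj & _).
  destruct (p_surj (sigma s)) as [eps p_eps].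
  set (lifts x y := p y = x /\ exists h, y = conjg eps h).
  assert (lifts_unique : forall x y y', lifts x y -> lifts x y' -> y = y').
  { intros x y y' [Hy [h ->]] [Hy' [h' ->]].
    apply (central_ext_conjg_lift_unique _ _ i p ext); [|congruence].
    rewrite p_eps. apply sigma_invol. }
  assert (lifts_exist : forall x, Q x -> exists y, lifts x y).
  { intros x Qx. destruct (Q_one_class _ _ (Q_sigma s) Qx) as [w ->].
    destruct (p_surj w) as [h <-]. exists (conjg eps h). split; [|eauto].
    now rewrite (hom_conjg _ _ p p_hom), p_eps. }
  set (f x := epsilon (inhabits one) (lifts x)).
  assert (f_lifts : forall x, Q x -> lifts x (f x)) by (intros; apply epsilon_spec; auto).
  destruct (proj2 HA E f) as [g [g_hom [g_e _]]].
  { intros x y Qx Qy. apply (lifts_unique (qop x y)); [|apply f_lifts, Q_qop; auto].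
    destruct (f_lifts x Qx) as [p_fx [h Hh]], (f_lifts y Qy) as [p_fy _].
    split.
    - fold (conjg (f x) (f y)). now rewrite (hom_conjg _ _ p p_hom), p_fx, p_fy, qop_conjg.
    - exists (mul h (f y)). fold (conjg (f x) (f y)). now rewrite Hh, conjgM. }
  exists g. split; [exact g_hom|].
  apply (A_hom_ext _ (fun a => p (g a)) phi).
  - intros a b. now rewrite g_hom, p_hom.
  - exact phi_hom.
  - intros x Qx. rewrite g_e, phi_e by exact Qx. apply (f_lifts x Qx).
Qed.

(* Twisting by [a |-> i (-(n/2) * deg a)] reduces [g z = i n] to [n mod 2]. *)
Lemma normalized_adjoint_lift :
  exists g : A -> E, is_hom g /\ (forall a, p (g a) = phi a) /\ (g z = one \/ g z = i 1%Z).
Proof.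
  pose proof ext as (i_hom & p_hom & _ & _ & p_ker & i_central).
  destruct adjoint_lift as [g0 [g0_hom p_g0]].
  destruct (proj1 (p_ker (g0 z))) as [n Hn]. { rewrite p_g0. apply phi_z. }
  set (k := (- (n / 2))%Z).
  exists (fun a => mul (g0 a) (i (k * deg a)%Z)). split; [|split].
  - now apply twist_hom.
  - intros a. rewrite p_hom, p_g0, (proj2 (p_ker _)) by eauto. apply mulg1.
  - rewrite Hn, deg_z, <- i_hom.
    assert (Hmod : (n + k * 2 = n mod 2)%Z) by (unfold k; rewrite (Z.div_mod n 2) at 1; lia).
    change (i (n + k * 2)%Z = one \/ i (n + k * 2)%Z = i 1%Z).
    rewrite Hmod. destruct (Z.mod_pos_bound n 2) as [Hge Hlt]; [lia|].
    destruct (Z.eq_dec (n mod 2) 0) as [-> | H1]; [left | right].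
    + apply (hom_one _ _ i i_hom).
    + f_equal. lia.
Qed.

Lemma central_ext_classification :
  trivial_ext i p \/ ext_equiv (fun n : Zgroup => zpow z n) phi i p.
Proof.
  pose proof ext as (i_hom & p_hom & _).
  destruct normalized_adjoint_lift as [g [g_hom [p_g [g_z | g_z]]]].
  - left.
    destruct (proj2 HW E (fun t => g (e (sigma t)))) as [sh [sh_hom [sh_sigma _]]].
    { now apply cox_rel_of_kill_z. }
    apply (split_central_ext_trivial _ _ i p ext sh sh_hom).
    apply (W_hom_ext _ (fun w => p (sh w)) (fun w => w)).
    + intros v w. now rewrite sh_hom, p_hom.
    + intros v w. reflexivity.
    + intros t. now rewrite sh_sigma, p_g, phi_e by apply Q_sigma.
  - right. exists g. split; [|split]; auto.
    intros n. rewrite (hom_zpow _ _ g g_hom), g_z, <- (hom_zpow _ _ i i_hom), Zgroup_zpow.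
    now rewrite Z.mul_1_l.
Qed.

End Classification.
End OneConjugacyClass.
End Adjoint.
End Coxeter.

Theorem corollary4p6
  (S : Type) (S_fin : exists l : list S, forall s, List.In s l)
  (m : S -> S -> option nat) (Hm : coxeter_matrix m)
  (W : group) (sigma : S -> W) (HW : is_coxeter_group m W sigma)
  (Hc : forall x y, in_QW sigma x -> in_QW sigma y ->
          exists w : W, y = mul (inv w) (mul x w))
  (A : group) (e : W -> A) (HA : is_adjoint_group (in_QW sigma) A e)
  (phi : A -> W) (Hphi : is_hom phi)
  (Hphie : forall x, in_QW sigma x -> phi (e x) = x)
  (s : S) :
  let iota : Zgroup -> A := fun n => zpow (mul (e (sigma s)) (e (sigma s))) n in
  is_central_ext iota phi /\
  ~ trivial_ext iota phi /\
  (forall (E : group) (i : Zgroup -> E) (p : E -> W),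
     is_central_ext i p -> trivial_ext i p \/ ext_equiv iota phi i p).
Proof.
  intros iota.
  destruct (adjoint_degree_exists S W sigma A e HA) as [deg [deg_hom deg_e]].
  split; [|split].
  - exact (phi_central_ext S m Hm W sigma HW A e HA Hc s phi deg Hphi Hphie deg_hom deg_e).
  - exact (phi_ext_nontrivial S m Hm W sigma HW A e HA Hc s phi deg Hphi Hphie deg_hom deg_e).
  - intros E i p ext.
    exact (central_ext_classification S m Hm W sigma HW A e HA Hc s phi deg Hphi Hphie
             deg_hom deg_e E i p ext).
Qed.
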